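(* Let $K\subset\mathbb{R}$ be a real biquadratic bicyclic number field with quadratic subfields $k_1,k_2,k_3$, let $\varepsilon_i>1$ be the fundamental unit of $k_i$ and $\lambda_i=N_{k_i/\mathbb{Q}}(\varepsilon_i)$. Let $\eta=\mathrm{sgn}(\eta)\,\varepsilon_1^{m_1}\varepsilon_2^{m_2}\varepsilon_3^{m_3}\in\mathcal{O}_{k_1}^\times\mathcal{O}_{k_2}^\times\mathcal{O}_{k_3}^\times$ with $m_1,m_2,m_3\in\mathbb{Z}$. Then $\eta\in\mathcal{O}_K^*$ if and only if $\lambda_1^{m_1}=\lambda_2^{m_2}=\lambda_3^{m_3}$.
   Context: $\mathcal{O}_k^\times$ denotes the unit group of the ring of integers of a number field $k$. For real $K$, $\mathcal{O}_K^*$ is defined as the set of $\eta\in\mathcal{O}_{k_1}^\times\mathcal{O}_{k_2}^\times\mathcal{O}_{k_3}^\times$ that are totally positive or totally negative (i.e. all conjugates of $\eta$ have the same sign). $\mathrm{sgn}(x)$ is the sign of $x$. *)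

From HB Require Import structures.
From mathcomp Require Import all_boot all_order all_algebra all_field.
Set Implicit Arguments. Unset Strict Implicit. Unset Printing Implicit Defensive.
Import Order.TTheory GRing.Theory Num.Theory.
Local Open Scope ring_scope.

(* All number fields are taken inside algC (algebraic complex numbers). *)

Definition sqfree (n : nat) : Prop := forall p : nat, prime p -> ~~ (p * p %| n)%N.

Definition qfield (d : nat) (x : algC) : Prop :=
  exists p q : rat, x = ratr p + ratr q * sqrtC d%:R.

Definition qint (d : nat) (x : algC) : Prop := qfield d x /\ x \in Aint.

Definition qunit (d : nat) (x : algC) : Prop :=
  qint d x /\ x != 0 /\ qint d x^-1.

Definition fund_unit (d : nat) (eps : algC) : Prop :=
  qunit d eps /\ 1 < eps /\
  forall u, qunit d u -> exists n : int, u = eps ^ n \/ u = - eps ^ n.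

(* third quadratic subfield of Q(sqrt d1, sqrt d2) *)
Definition d3_of (d1 d2 : nat) : nat := (d1 * d2 %/ (gcdn d1 d2 ^ 2))%N.

Definition in_unit_prod (d1 d2 d3 : nat) (x : algC) : Prop :=
  exists u1 u2 u3, [/\ qunit d1 u1, qunit d2 u2, qunit d3 u3 & x = u1 * u2 * u3].

(* conjugates of x over Q: roots of its minimal polynomial over Q *)
Definition totally_pos_or_neg (x : algC) : Prop :=
  (forall z, root (minCpoly x) z -> 0 < z) \/
  (forall z, root (minCpoly x) z -> z < 0).

Definition in_OKstar (d1 d2 d3 : nat) (x : algC) : Prop :=
  in_unit_prod d1 d2 d3 x /\ totally_pos_or_neg x.

From HB Require Import structures.
From mathcomp Require Import all_boot all_order all_algebra all_field.
From mathcomp Require Import ring.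
Import Order.TTheory GRing.Theory Num.Theory.
Local Open Scope ring_scope.

(* The Galois group of K = Q(a, b), a = sqrt d1, b = sqrt d2, consists of the
   four sign changes of a and b; on c = sqrt d3 = a b / g the pair of signs
   (t1, t2) acts by the sign t1 (+) t2.  A unit e = p + q s of Q(s) has
   conjugate p - q s = lam / e with lam = +-1, so the conjugate of eta by
   (t1, t2) is eta times lam1^(t1 m1) lam2^(t2 m2) lam3^((t1 (+) t2) m3) times
   a positive real.  These four conjugates are all the roots of the minimal
   polynomial of eta, hence eta is totally positive or totally negative iff
   all four sign factors are 1, i.e. iff lam1^m1 = lam2^m2 = lam3^m3.
   The irrationality of a, b and c (which gives the linear independence of
   1, a, b, a b over Q) follows from the existence of fundamental units > 1. *)

Lemma Crat_lin_indep {s : algC} {A B : rat} :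
  s \notin Crat -> ratr A + ratr B * s = 0 -> A = 0 /\ B = 0.
Proof.
move=> s_irr AB0; have [B0|nzB] := eqVneq B 0.
  by move: AB0; rewrite B0 rmorph0 mul0r addr0 => /eqP; rewrite fmorph_eq0 => /eqP.
case/negP: s_irr; apply/CratP; exists (- A / B).
have nzB' : ratr B != 0 :> algC by rewrite fmorph_eq0.
apply: (mulIf nzB'); rewrite fmorph_div rmorphN divfK //=.
by rewrite -[RHS]add0r -AB0; ring.
Qed.

Definition qspan (s x : algC) : Prop := exists p q : rat, x = ratr p + ratr q * s.

Section QuadraticSpan.

Context {s : algC} {s2 : rat}.
Hypothesis s2E : s ^+ 2 = ratr s2.

Lemma qspan_mul x y : qspan s x -> qspan s y -> qspan s (x * y).
Proof.
move=> [p [q ->]] [p' [q' ->]].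
exists (p * p' + q * q' * s2), (p * q' + q * p').
by rewrite !(rmorphD, rmorphM) /= -s2E; ring.
Qed.

Lemma qspan_conj_expzE {t : bool} {e p q} {m : int} :
  e = ratr p + ratr q * s -> e != 0 ->
  (ratr p + ratr q * ((-1) ^+ t * s)) ^ m =
  ratr (((p ^+ 2 - s2 * q ^+ 2) ^ m) ^+ t) * (if t then e^-1 else e) ^ m.
Proof.
move=> eE nze; case: t; last by rewrite expr0 !mul1r rmorph1 mul1r eE.
have -> : ratr p + ratr q * ((-1) ^+ true * s) = ratr (p ^+ 2 - s2 * q ^+ 2) * e^-1.
  apply: (mulIf nze); rewrite divfK // eE.
  by rewrite !(rmorphB, rmorphM, rmorphXn) /= -s2E; ring.
by rewrite expfzMl fmorphXz.
Qed.

Hypothesis s_irr : s \notin Crat.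

Lemma qspan_inv x : qspan s x -> qspan s x^-1.
Proof.
move=> [p [q ->]]; pose N := p ^+ 2 - s2 * q ^+ 2.
have normE : (ratr p + ratr q * s) * (ratr p - ratr q * s) = ratr N :> algC.
  by rewrite /N !(rmorphB, rmorphM, rmorphXn) /= -s2E; ring.
have [N0|nzN] := eqVneq N 0.
  have [-> ->] : p = 0 /\ q = 0.
    move: normE; rewrite N0 rmorph0 => /eqP; rewrite mulf_eq0.
    case/orP=> /eqP; last rewrite -mulNr -rmorphN.
      by move=> /(Crat_lin_indep s_irr).
    by move=> /(Crat_lin_indep s_irr) [-> /eqP]; rewrite oppr_eq0 => /eqP.
  by exists 0, 0; rewrite !rmorph0 !mul0r !addr0 invr0.
have nzN' : ratr N != 0 :> algC by rewrite fmorph_eq0.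
have nz_conj : ratr p - ratr q * s != 0 :> algC.
  by apply: contra nzN'; rewrite -normE => /eqP ->; rewrite mulr0.
have -> : (ratr p + ratr q * s)^-1 = (ratr p - ratr q * s) / ratr N.
  by rewrite -normE invfM mulrCA divff ?mulr1.
exists (p / N), (- q / N); rewrite !fmorph_div rmorphN /=; field; exact: nzN'.
Qed.

Lemma qspan_sqr_Crat {x} : qspan s x -> x ^+ 2 \in Crat -> x \in Crat \/ x * s \in Crat.
Proof.
move=> [p [q ->]] /CratP [r sqrE].
have [] : p ^+ 2 + q ^+ 2 * s2 - r = 0 /\ 2 * p * q = 0.
  apply: (Crat_lin_indep s_irr); rewrite -[0](subrr (ratr r)) -{1}sqrE.
  by rewrite !(rmorphB, rmorphD, rmorphM, rmorphXn, rmorph1) /= -s2E; ring.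
move=> _ /eqP; rewrite -mulrA mulf_eq0 pnatr_eq0 /= mulf_eq0 => /orP[]/eqP->.
  by right; rewrite rmorph0 add0r -mulrA -expr2 s2E rpredM ?Crat_rat.
by left; rewrite rmorph0 mul0r addr0 Crat_rat.
Qed.

End QuadraticSpan.

Lemma sqrtC_natK (d : nat) : sqrtC d%:R ^+ 2 = ratr d%:R :> algC.
Proof. by rewrite sqrtCK rmorph_nat. Qed.

Lemma qunit_mul d x y : qunit d x -> qunit d y -> qunit d (x * y).
Proof.
move=> [[xS xA] [nzx [xiS xiA]]] [[yS yA] [nzy [yiS yiA]]].
have qfieldM := qspan_mul (sqrtC_natK d).
by do !split; rewrite ?invfM ?mulf_neq0 ?rpredM //; apply: qfieldM.
Qed.

Lemma qunit_inv d x : qunit d x -> qunit d x^-1.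
Proof. by move=> [xI [nzx xiI]]; split; last split; rewrite ?invrK ?invr_eq0. Qed.

Lemma qunit_sign d n : qunit d ((-1) ^+ n).
Proof.
have signS : qspan (sqrtC d%:R) ((-1) ^+ n).
  by exists ((-1) ^+ n), 0; rewrite rmorph_sign rmorph0 mul0r addr0.
by do !split; rewrite ?invr_sign ?signr_eq0 ?rpred_sign.
Qed.

Lemma qunit_expz d x (m : int) : qunit d x -> qunit d (x ^ m).
Proof.
have qunit_exp n : qunit d x -> qunit d (x ^+ n).
  move=> xU; elim: n => [|n IHn]; first exact: (qunit_sign d 0).
  by rewrite exprS; apply: qunit_mul.
by case: m => n xU; [apply: qunit_exp | apply/qunit_inv/qunit_exp].
Qed.

Lemma in_unit_prod_sign_expz d1 d2 d3 e1 e2 e3 (s : bool) (m1 m2 m3 : int) :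
  qunit d1 e1 -> qunit d2 e2 -> qunit d3 e3 ->
  in_unit_prod d1 d2 d3 ((-1) ^+ s * (e1 ^ m1 * e2 ^ m2 * e3 ^ m3)).
Proof.
move=> e1U e2U e3U; exists ((-1) ^+ s * e1 ^ m1), (e2 ^ m2), (e3 ^ m3).
split; rewrite ?mulrA //; try exact: qunit_expz.
by apply: qunit_mul; [apply: qunit_sign | apply: qunit_expz].
Qed.

Lemma Aint_unit_gt1_notin_Crat {e : algC} : 1 < e -> e^-1 \in Aint -> e \notin Crat.
Proof.
move=> e_gt1 eiA; apply/negP; rewrite -rpredV => eiQ.
have ei_gt0 : 0 < e^-1 by rewrite invr_gt0 (lt_trans ltr01).
have ei_lt1 : e^-1 < 1 by rewrite invf_lt1 ?(lt_trans ltr01).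
move: (Cint_rat_Aint eiQ eiA); rewrite intrEge0 ?ltW // => /natrP[n nE].
by move: ei_gt0 ei_lt1; rewrite nE ltr0n ltrn1; case: n {nE}.
Qed.

Lemma fund_unit_sqrt_notin_Crat {d e p q} :
  fund_unit d e -> e = ratr p + ratr q * sqrtC d%:R -> sqrtC d%:R \notin Crat.
Proof.
move=> [[_ [_ [_ eiA]]] [e_gt1 _]] eE; apply/negP => sQ.
case/negP: (Aint_unit_gt1_notin_Crat e_gt1 eiA); rewrite eE.
by apply: rpredD; [|apply: rpredM]; first [exact: Crat_rat | exact: sQ].
Qed.

Lemma Aint_conj {x y} : x \in Aint -> root (minCpoly x) y -> y \in Aint.
Proof. by move=> xA /root_monic_Aint; apply; [apply: minCpoly_monic | apply: xA]. Qed.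

Lemma rat_Aint_unit (l : rat) :
  l != 0 -> ratr l \in Aint -> ratr l^-1 \in Aint -> l = 1 \/ l = -1.
Proof.
move=> nzl lA liA; set x : algC := ratr l.
have nzx : x != 0 by rewrite fmorph_eq0.
have xZ : x \is a Num.int := Cint_rat_Aint (Crat_rat l) lA.
have xiZ : x^-1 \is a Num.int by rewrite -fmorphV; apply: Cint_rat_Aint (Crat_rat _) liA.
have /eqP : `|x| = 1.
  apply/eqP; rewrite eq_le norm_intr_ge1 // andbT -invf_ge1 ?normr_gt0 //.
  by rewrite -normfV norm_intr_ge1 ?invr_eq0.
rewrite real_eqr_norml ?Creal_Crat ?Crat_rat // ler01 andbT.
by case/orP=> /eqP xE; [left | right]; apply: (@fmorph_inj _ algC ratr);
  rewrite [LHS]xE ?rmorphN1 ?rmorph1.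
Qed.

Definition biquad (a b : algC) (A B C D : rat) : algC :=
  ratr A + ratr B * a + ratr C * b + ratr D * (a * b).

Lemma biquad_rat (u v : algC) r : biquad u v r 0 0 0 = ratr r.
Proof. by rewrite /biquad !rmorph0 !mul0r !addr0. Qed.

Lemma biquad_add (u v : algC) A B C D A' B' C' D' :
  biquad u v A B C D + biquad u v A' B' C' D' =
  biquad u v (A + A') (B + B') (C + C') (D + D').
Proof. by rewrite /biquad !rmorphD; ring. Qed.

Lemma biquad_mul {u v : algC} {u2 v2 : rat} :
  u ^+ 2 = ratr u2 -> v ^+ 2 = ratr v2 -> forall A B C D A' B' C' D',
  biquad u v A B C D * biquad u v A' B' C' D' =
  biquad u v (A * A' + B * B' * u2 + C * C' * v2 + D * D' * u2 * v2)
             (A * B' + B * A' + (C * D' + D * C') * v2)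
             (A * C' + C * A' + (B * D' + D * B') * u2)
             (A * D' + D * A' + B * C' + C * B').
Proof.
by move=> u2E v2E *; rewrite /biquad !(rmorphD, rmorphM) /= -u2E -v2E; ring.
Qed.

(* [conj_by a b t1 t2 x y]: y is the image of x under the automorphism of
   Q(a, b) sending a to (-1)^t1 a and b to (-1)^t2 b, expressed through the
   rational coordinates of x in the basis 1, a, b, a b. *)
Definition conj_by (a b : algC) (t1 t2 : bool) (x y : algC) : Prop :=
  exists A B C D, x = biquad a b A B C D /\ y = biquad ((-1) ^+ t1 * a) ((-1) ^+ t2 * b) A B C D.

Section Biquadratic.

Context {a b : algC} {a2 b2 : rat}.
Hypotheses (a2E : a ^+ 2 = ratr a2) (b2E : b ^+ 2 = ratr b2).

Lemma minCpoly_biquad_roots A B C D z :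
  root (minCpoly (biquad a b A B C D)) z ->
  exists t1 t2 : bool, z = biquad ((-1) ^+ t1 * a) ((-1) ^+ t2 * b) A B C D.
Proof.
pose Y : {poly rat} := 'X - A%:P.
pose R := Y ^+ 2 + (B ^+ 2 * a2 - C ^+ 2 * b2 - D ^+ 2 * a2 * b2)%:P.
pose S := (B *+ 2)%:P * Y + (C * D * b2 *+ 2)%:P.
(* Pairing the conjugates by the sign of b gives R - S a, then pairing by the
   sign of a gives Q. *)
pose Q := R ^+ 2 - a2%:P * S ^+ 2.
have QE w : (map_poly ratr Q).[w] =
    (w - biquad a b A B C D) * (w - biquad a (- b) A B C D) *
    (w - biquad (- a) b A B C D) * (w - biquad (- a) (- b) A B C D).
  rewrite /Q /R /S /Y !(rmorphB, rmorphD, rmorphM, rmorphXn, rmorphMn) /= map_polyX !map_polyC.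
  rewrite !(hornerD, hornerN, hornerM, hornerX, hornerC, horner_exp) /biquad.
  by rewrite /= -a2E -b2E; ring.
have [p [minE _] min_dvd] := minCpolyP (biquad a b A B C D).
have pQ : (map_poly ratr p %| map_poly (ratr : rat -> algC) Q)%R.
  by rewrite dvdp_map -min_dvd /root QE subrr !mul0r.
rewrite minE => /(root_dvdp pQ); rewrite /root QE !mulf_eq0 !subr_eq0.
case/orP=> [/orP[/orP[]|]|] /eqP ->.
- by exists false, false; rewrite !mul1r.
- by exists false, true; rewrite mul1r mulN1r.
- by exists true, false; rewrite mul1r mulN1r.
- by exists true, true; rewrite !mulN1r.
Qed.

Hypotheses (a_irr : a \notin Crat) (b_irr : b \notin Crat) (ab_irr : a * b \notin Crat).

Lemma biquad_eq0 A B C D :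
  biquad a b A B C D = 0 -> [/\ A = 0, B = 0, C = 0 & D = 0].
Proof.
have biquadE : biquad a b A B C D = (ratr A + ratr B * a) + (ratr C + ratr D * a) * b.
  by rewrite /biquad; ring.
rewrite biquadE; have [CD0 AB0|nzCD] := eqVneq (ratr C + ratr D * a) 0.
  have [-> ->] := Crat_lin_indep a_irr CD0.
  by move: AB0; rewrite CD0 mul0r addr0 => /(Crat_lin_indep a_irr) [-> ->].
(* Otherwise b lies in Q(a); since b^2 is rational, b or a b would be rational. *)
move=> /eqP; rewrite addr_eq0 => /eqP ABE; exfalso.
have b_span : qspan a b.
  have -> : b = - (ratr A + ratr B * a) * (ratr C + ratr D * a)^-1.
    by rewrite ABE opprK mulrC mulKf.
  apply: (qspan_mul a2E); first by exists (- A), (- B); rewrite !rmorphN; ring.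
  by apply: (qspan_inv a2E a_irr); exists C, D.
have [] := qspan_sqr_Crat a2E a_irr b_span; rewrite ?b2E ?Crat_rat //; first by apply/negP.
by rewrite mulrC; apply/negP.
Qed.

Lemma biquad_inj A B C D A' B' C' D' :
  biquad a b A B C D = biquad a b A' B' C' D' ->
  [/\ A = A', B = B', C = C' & D = D'].
Proof.
have oppE : - biquad a b A' B' C' D' = biquad a b (- A') (- B') (- C') (- D').
  by rewrite /biquad !rmorphN; ring.
move/eqP; rewrite -subr_eq0 oppE biquad_add => /eqP/biquad_eq0[].
by move=> /eqP + /eqP + /eqP + /eqP; rewrite !subr_eq0 => /eqP-> /eqP-> /eqP-> /eqP->.
Qed.

Section Conjugation.

Variables t1 t2 : bool.
Local Notation a' := ((-1) ^+ t1 * a).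
Local Notation b' := ((-1) ^+ t2 * b).
Local Notation conj := (conj_by a b t1 t2).

Lemma conj_by_rat r : conj (ratr r) (ratr r).
Proof. by exists r, 0, 0, 0; rewrite !biquad_rat. Qed.

Lemma conj_by_add {x y x' y'} :
  conj x y -> conj x' y' -> conj (x + x') (y + y').
Proof.
move=> [A [B [C [D [-> ->]]]]] [A' [B' [C' [D' [-> ->]]]]].
by do 4!eexists; split; apply: biquad_add.
Qed.

Lemma conj_by_mul {x y x' y'} :
  conj x y -> conj x' y' -> conj (x * x') (y * y').
Proof.
have a'2E : a' ^+ 2 = ratr a2 by rewrite exprMn sqrr_sign mul1r.
have b'2E : b' ^+ 2 = ratr b2 by rewrite exprMn sqrr_sign mul1r.
move=> [A [B [C [D [-> ->]]]]] [A' [B' [C' [D' [-> ->]]]]].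
by do 4!eexists; split; [apply: (biquad_mul a2E b2E) | apply: (biquad_mul a'2E b'2E)].
Qed.

Lemma conj_by_exp {x y} n : conj x y -> conj (x ^+ n) (y ^+ n).
Proof.
move=> xy; elim: n => [|n IHn]; last by rewrite !exprS; apply: conj_by_mul.
by rewrite !expr0 -(rmorph1 (ratr : rat -> algC)); apply: conj_by_rat.
Qed.

Lemma conj_by_horner {x y} :
  conj x y -> forall p : {poly rat}, conj (map_poly ratr p).[x] (map_poly ratr p).[y].
Proof.
move=> xy; elim/poly_ind => [|p c IHp].
  by rewrite rmorph0 !horner0 -(rmorph0 (ratr : rat -> algC)); apply: conj_by_rat.
rewrite rmorphD rmorphM /= map_polyX map_polyC !hornerE.
by apply: conj_by_add; [apply: conj_by_mul | apply: conj_by_rat].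
Qed.

Lemma conj_by_coords {x y A B C D} :
  conj x y -> x = biquad a b A B C D -> y = biquad a' b' A B C D.
Proof.
by move=> [A' [B' [C' [D' [-> ->]]]]] /biquad_inj[-> -> -> ->].
Qed.

Lemma conj_by_root {x y} :
  conj x y -> forall p : {poly rat}, root (map_poly ratr p) x -> root (map_poly ratr p) y.
Proof.
move=> /conj_by_horner xy p; have [A [B [C [D [pxE pyE]]]]] := xy p.
rewrite /root pxE pyE => /eqP /biquad_eq0[-> -> -> ->].
by rewrite biquad_rat rmorph0.
Qed.

Lemma conj_by_minCpoly {x y} : conj x y -> root (minCpoly x) y.
Proof.
have [p [minE _] _] := minCpolyP x.
by move=> xy; rewrite minE (conj_by_root xy) // -minE root_minCpoly.
Qed.

Lemma conj_by_inv {x y z} :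
  x != 0 -> conj x y -> conj x^-1 z -> y * z = 1.
Proof.
move=> nzx xy xz.
have := conj_by_coords (A := 1) (B := 0) (C := 0) (D := 0) (conj_by_mul xy xz).
by rewrite mulfV // !biquad_rat rmorph1; apply.
Qed.

Lemma conj_by_expz {x y} (m : int) :
  x != 0 -> conj x y -> (exists z, conj x^-1 z) -> conj (x ^ m) (y ^ m).
Proof.
move=> nzx xy [z xz]; case: m => n; first exact: conj_by_exp.
rewrite /exprz -!exprVn; apply: conj_by_exp.
by rewrite (mulr1_eq (conj_by_inv nzx xy xz)).
Qed.

Lemma conj_by_qspan_l p q :
  conj (ratr p + ratr q * a) (ratr p + ratr q * a').
Proof. by exists p, q, 0, 0; rewrite /biquad !rmorph0 !mul0r !addr0. Qed.

Lemma conj_by_qspan_r p q :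
  conj (ratr p + ratr q * b) (ratr p + ratr q * b').
Proof. by exists p, 0, q, 0; rewrite /biquad !rmorph0 !mul0r !addr0. Qed.

Lemma conj_by_qspan_lr {c : algC} {g : rat} :
  g != 0 -> a * b = ratr g * c -> forall p q,
  conj (ratr p + ratr q * c) (ratr p + ratr q * ((-1) ^+ (t1 (+) t2) * c)).
Proof.
move=> nzg abE p q; exists p, 0, 0, (q / g); rewrite /biquad !rmorph0 !mul0r !addr0.
have nzg' : ratr g != 0 :> algC by rewrite fmorph_eq0.
have coefE : ratr (q / g) * (a * b) = ratr q * c :> algC.
  by rewrite abE fmorph_div mulrA divfK.
split; first by rewrite coefE.
by rewrite mulrCA -coefE signr_addb; ring.
Qed.

Section QuadraticUnit.

Variables (d : nat) (t : bool).
Local Notation s := (sqrtC d%:R).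
Hypothesis s_conj :
  forall p q, conj (ratr p + ratr q * s) (ratr p + ratr q * ((-1) ^+ t * s)).

Lemma qunit_conj_by_expz {e p q} (m : int) :
  qunit d e -> e = ratr p + ratr q * s ->
  conj (e ^ m) ((ratr p + ratr q * ((-1) ^+ t * s)) ^ m).
Proof.
move=> [_ [nze [[p' [q' eiE]] _]]] eE; apply: conj_by_expz nze _ _.
  by rewrite eE; apply: s_conj.
by exists (ratr p' + ratr q' * ((-1) ^+ t * s)); rewrite eiE; apply: s_conj.
Qed.

Lemma qunit_norm_pm1 {e p q} :
  t -> qunit d e -> e = ratr p + ratr q * s ->
  p ^+ 2 - d%:R * q ^+ 2 = 1 \/ p ^+ 2 - d%:R * q ^+ 2 = -1.
Proof.
move=> t_true [[_ eA] [nze [[p' [q' eiE]] eiA]]] eE.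
pose y : algC := ratr p + ratr q * ((-1) ^+ t * s).
pose z : algC := ratr p' + ratr q' * ((-1) ^+ t * s).
have ey : conj e y by rewrite eE; apply: s_conj.
have eiz : conj e^-1 z by rewrite eiE; apply: s_conj.
have yz1 := conj_by_inv nze ey eiz.
have normE : e * y = ratr (p ^+ 2 - d%:R * q ^+ 2).
  rewrite /y t_true eE expr1 !(rmorphB, rmorphM, rmorphXn) /= -[ratr d%:R]sqrtC_natK.
  ring.
have nzy : y != 0 by apply: contra_eq_neq yz1 => ->; rewrite mul0r eq_sym oner_eq0.
apply: rat_Aint_unit.
- by move: (mulf_neq0 nze nzy); rewrite normE fmorph_eq0.
- have : e * y \in Aint by rewrite rpredM // (Aint_conj eA (conj_by_minCpoly ey)).
  by rewrite normE.
have : (e * y)^-1 \in Aint.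
  by rewrite invfM rpredM // (mulr1_eq yz1) (Aint_conj eiA (conj_by_minCpoly eiz)).
by rewrite normE -fmorphV.
Qed.

End QuadraticUnit.

End Conjugation.

Lemma conj_by_roots x (f : bool -> bool -> algC) :
  (forall t1 t2, conj_by a b t1 t2 x (f t1 t2)) ->
  forall z, root (minCpoly x) z <-> exists t1 t2, z = f t1 t2.
Proof.
move=> xf z; split=> [|[t1 [t2 ->]]]; last exact: conj_by_minCpoly (xf t1 t2).
have [A [B [C [D [xE _]]]]] := xf false false.
rewrite xE => /minCpoly_biquad_roots[t1 [t2 ->]]; exists t1, t2.
by rewrite (conj_by_coords t1 t2 (xf t1 t2) xE).
Qed.

End Biquadratic.

Lemma sqr1_mul_gt0 {R : realDomainType} (u v : R) :
  u ^+ 2 = 1 -> v ^+ 2 = 1 -> (0 < u * v) = (u == v).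
Proof.
have N1_lt1 : -1 < 1 :> R := lt_trans (ltrN10 R) ltr01.
move=> /eqP + /eqP; rewrite !sqrf_eq1 => /orP[]/eqP-> /orP[]/eqP->;
  by rewrite ?(mul1r, mulN1r, opprK, ltr01, ltr0N1, eqxx, lt_eqF N1_lt1, gt_eqF N1_lt1).
Qed.

Lemma sign_pattern_gt0 {R : realDomainType} {x y z : R} :
  x ^+ 2 = 1 -> y ^+ 2 = 1 -> z ^+ 2 = 1 ->
  (forall t1 t2 : bool, 0 < x ^+ t1 * y ^+ t2 * z ^+ (t1 (+) t2)) <-> x = y /\ y = z.
Proof.
move=> x2 y2 z2; split=> [pos | [-> ->] [] []] /=; last first.
- by rewrite !expr0 !mul1r ltr01.
- by rewrite expr0 expr1 mul1r -expr2 z2 ltr01.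
- by rewrite expr0 expr1 mulr1 -expr2 z2 ltr01.
- by rewrite expr0 expr1 mulr1 -expr2 z2 ltr01.
have /= := pos true false; have /= := pos false true.
rewrite !expr0 !expr1 mulr1 !mul1r !sqr1_mul_gt0 // => /eqP yz /eqP xz.
by rewrite xz yz.
Qed.

Lemma sqr_expz_pm1 {R : unitRingType} (l : R) (m : int) :
  l = 1 \/ l = -1 -> (l ^ m) ^+ 2 = 1.
Proof.
have -> : (l ^ m) ^+ 2 = (l ^+ 2) ^ m := exprzAC l m 2.
by case=> ->; rewrite ?sqrrN expr1n exp1rz.
Qed.

Lemma totally_pos_or_negP {x : algC} {s : bool} {I : Type} (i0 : I)
    (w : I -> rat) (P : I -> algC) :
  (forall z, root (minCpoly x) z <-> exists i, z = (-1) ^+ s * ratr (w i) * P i) ->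
  (forall i, 0 < P i) -> 0 < w i0 ->
  totally_pos_or_neg x <-> forall i, 0 < w i.
Proof.
move=> rootsE P_gt0 w0_gt0; pose z i := (-1) ^+ s * ratr (w i) * P i.
have root_z i : root (minCpoly x) (z i) by apply/rootsE; exists i.
split=> [same_sign i | w_gt0].
  have zz_gt0 : 0 < z i * z i0.
    case: same_sign => sgn; first by apply: mulr_gt0; apply: sgn.
    by rewrite nmulr_lgt0; apply: sgn.
  have zzE : z i * z i0 = ((-1) ^+ s) ^+ 2 * ratr (w i * w i0) * (P i * P i0).
    by rewrite /z rmorphM; ring.
  have PP_gt0 : 0 < P i * P i0 := mulr_gt0 (P_gt0 i) (P_gt0 i0).
  move: zz_gt0; rewrite zzE sqrr_sign mul1r (pmulr_lgt0 _ PP_gt0).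
  by rewrite ltr0q pmulr_lgt0.
have z_gt0 i : 0 < ratr (w i) * P i by rewrite mulr_gt0 ?ltr0q.
by case: s {z root_z} rootsE => rootsE; [right | left] => _ /rootsE[i ->];
  rewrite ?expr1 ?expr0 -mulrA ?mulN1r ?oppr_lt0 ?mul1r.
Qed.

Lemma d3_ofP d1 d2 : (d1 * d2 = gcdn d1 d2 ^ 2 * d3_of d1 d2)%N.
Proof.
by rewrite /d3_of [RHS]mulnC divnK // expnS expn1 dvdn_mul ?dvdn_gcdl ?dvdn_gcdr.
Qed.

Lemma sqrtC_mul_nat (d1 d2 d3 g : nat) :
  (d1 * d2 = g ^ 2 * d3)%N -> sqrtC d1%:R * sqrtC d2%:R = g%:R * sqrtC d3%:R :> algC.
Proof.
move=> dE; rewrite -sqrtCM ?nnegrE ?ler0n // -natrM dE natrM natrX.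
by rewrite sqrtCM ?nnegrE ?exprn_ge0 ?ler0n // sqrCK ?ler0n.
Qed.

Section RealBiquadraticUnits.

Context {d1 d2 d3 g : nat} {e1 e2 e3 : algC} {p1 q1 p2 q2 p3 q3 : rat}.
Hypotheses (dE : (d1 * d2 = g ^ 2 * d3)%N) (g_gt0 : (0 < g)%N).
Hypotheses (e1U : fund_unit d1 e1) (e2U : fund_unit d2 e2) (e3U : fund_unit d3 e3).
Hypotheses (e1E : e1 = ratr p1 + ratr q1 * sqrtC d1%:R)
           (e2E : e2 = ratr p2 + ratr q2 * sqrtC d2%:R)
           (e3E : e3 = ratr p3 + ratr q3 * sqrtC d3%:R).

Local Notation a := (sqrtC d1%:R : algC).
Local Notation b := (sqrtC d2%:R : algC).
Local Notation c := (sqrtC d3%:R : algC).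
Local Notation lam1 := (p1 ^+ 2 - d1%:R * q1 ^+ 2).
Local Notation lam2 := (p2 ^+ 2 - d2%:R * q2 ^+ 2).
Local Notation lam3 := (p3 ^+ 2 - d3%:R * q3 ^+ 2).

Let abE : a * b = ratr g%:R * c.
Proof. by rewrite rmorph_nat; apply: sqrtC_mul_nat. Qed.

Let nzg : g%:R != 0 :> rat.
Proof. by rewrite pnatr_eq0 -lt0n. Qed.

Let a_irr : a \notin Crat := fund_unit_sqrt_notin_Crat e1U e1E.
Let b_irr : b \notin Crat := fund_unit_sqrt_notin_Crat e2U e2E.

Let ab_irr : a * b \notin Crat.
Proof.
apply: contra (fund_unit_sqrt_notin_Crat e3U e3E) => abQ.
have -> : c = a * b / ratr g%:R by rewrite abE mulrC mulKf ?fmorph_eq0.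
by rewrite rpredM ?rpredV // Crat_rat.
Qed.

Let unit_gt0 {d e} : fund_unit d e -> 0 < e.
Proof. by move=> [_ [e_gt1 _]]; apply: lt_trans e_gt1. Qed.

Let unit_neq0 {d e} (eU : fund_unit d e) : e != 0 := lt0r_neq0 (unit_gt0 eU).

Local Notation a2E := (sqrtC_natK d1).
Local Notation b2E := (sqrtC_natK d2).
Local Notation c2E := (sqrtC_natK d3).

Lemma lam_pm1 : [/\ lam1 = 1 \/ lam1 = -1, lam2 = 1 \/ lam2 = -1 & lam3 = 1 \/ lam3 = -1].
Proof.
split.
- exact: (qunit_norm_pm1 a2E b2E a_irr b_irr ab_irr true false d1 true
            (conj_by_qspan_l true false) isT e1U.1 e1E).
- exact: (qunit_norm_pm1 a2E b2E a_irr b_irr ab_irr false true d2 true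
            (conj_by_qspan_r false true) isT e2U.1 e2E).
- exact: (qunit_norm_pm1 a2E b2E a_irr b_irr ab_irr true false d3 true
            (conj_by_qspan_lr true false nzg abE) isT e3U.1 e3E).
Qed.

Lemma conj_by_unit_prod (s : bool) (m1 m2 m3 : int) t1 t2 :
  conj_by a b t1 t2 ((-1) ^+ s * (e1 ^ m1 * e2 ^ m2 * e3 ^ m3))
    ((-1) ^+ s * ratr ((lam1 ^ m1) ^+ t1 * (lam2 ^ m2) ^+ t2 * (lam3 ^ m3) ^+ (t1 (+) t2))
     * ((if t1 then e1^-1 else e1) ^ m1 * (if t2 then e2^-1 else e2) ^ m2
        * (if t1 (+) t2 then e3^-1 else e3) ^ m3)).
Proof.
have conj1 := qunit_conj_by_expz a2E b2E a_irr b_irr ab_irr t1 t2 d1 t1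
  (conj_by_qspan_l t1 t2) m1 e1U.1 e1E.
have conj2 := qunit_conj_by_expz a2E b2E a_irr b_irr ab_irr t1 t2 d2 t2
  (conj_by_qspan_r t1 t2) m2 e2U.1 e2E.
have conj3 := qunit_conj_by_expz a2E b2E a_irr b_irr ab_irr t1 t2 d3 (t1 (+) t2)
  (conj_by_qspan_lr t1 t2 nzg abE) m3 e3U.1 e3E.
rewrite (qspan_conj_expzE a2E e1E (unit_neq0 e1U)) in conj1.
rewrite (qspan_conj_expzE b2E e2E (unit_neq0 e2U)) in conj2.
rewrite (qspan_conj_expzE c2E e3E (unit_neq0 e3U)) in conj3.
have := conj_by_mul a2E b2E t1 t2 (conj_by_rat t1 t2 ((-1) ^+ s))
  (conj_by_mul a2E b2E t1 t2 (conj_by_mul a2E b2E t1 t2 conj1 conj2) conj3).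
by rewrite rmorph_sign !rmorphM; congr conj_by; ring.
Qed.

Lemma unit_prod_totally_pos_or_negP (s : bool) (m1 m2 m3 : int) :
  totally_pos_or_neg ((-1) ^+ s * (e1 ^ m1 * e2 ^ m2 * e3 ^ m3)) <->
  lam1 ^ m1 = lam2 ^ m2 /\ lam2 ^ m2 = lam3 ^ m3.
Proof.
have [l1 l2 l3] := lam_pm1.
rewrite -(sign_pattern_gt0 (sqr_expz_pm1 _ m1 l1) (sqr_expz_pm1 _ m2 l2)
                           (sqr_expz_pm1 _ m3 l3)).
pose w (t : bool * bool) :=
  (lam1 ^ m1) ^+ t.1 * (lam2 ^ m2) ^+ t.2 * (lam3 ^ m3) ^+ (t.1 (+) t.2).
pose P (t : bool * bool) :=
  (if t.1 then e1^-1 else e1) ^ m1 * (if t.2 then e2^-1 else e2) ^ m2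
  * (if t.1 (+) t.2 then e3^-1 else e3) ^ m3.
rewrite (totally_pos_or_negP (false, false) w P).
- by split=> w_gt0 => [t1 t2 | [t1 t2]]; [apply: (w_gt0 (t1, t2)) | apply: w_gt0].
- move=> z; have := conj_by_unit_prod s m1 m2 m3.
  move=> /(conj_by_roots a2E b2E a_irr b_irr ab_irr) ->.
  by split=> [[t1 [t2 ->]] | [[t1 t2] ->]]; [exists (t1, t2) | exists t1, t2].
- have U_gt0 t d e : fund_unit d e -> 0 < if t then e^-1 else e.
    by move=> /unit_gt0 e_gt0; case: t; rewrite ?invr_gt0.
  by move=> [t1 t2]; rewrite !mulr_gt0 // exprz_gt0 //; apply: U_gt0; eassumption.
- by rewrite /w !expr0 !mul1r ltr01.
Qed.

End RealBiquadraticUnits.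

Theorem mainTheorem2 (d1 d2 : nat)
  (hd1 : (1 < d1)%N) (hd2 : (1 < d2)%N) (sq1 : sqfree d1) (sq2 : sqfree d2)
  (hneq : d1 <> d2)
  (e1 e2 e3 : algC)
  (he1 : fund_unit d1 e1) (he2 : fund_unit d2 e2) (he3 : fund_unit (d3_of d1 d2) e3)
  (p1 q1 p2 q2 p3 q3 : rat)
  (hr1 : e1 = ratr p1 + ratr q1 * sqrtC d1%:R)
  (hr2 : e2 = ratr p2 + ratr q2 * sqrtC d2%:R)
  (hr3 : e3 = ratr p3 + ratr q3 * sqrtC (d3_of d1 d2)%:R)
  (s : bool) (m1 m2 m3 : int) :
  let lam1 := p1 ^+ 2 - d1%:R * q1 ^+ 2 in
  let lam2 := p2 ^+ 2 - d2%:R * q2 ^+ 2 in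
  let lam3 := p3 ^+ 2 - (d3_of d1 d2)%:R * q3 ^+ 2 in
  let eta := (-1) ^+ s * (e1 ^ m1 * e2 ^ m2 * e3 ^ m3) in
  in_OKstar d1 d2 (d3_of d1 d2) eta <->
  (lam1 ^ m1 = lam2 ^ m2 /\ lam2 ^ m2 = lam3 ^ m3).
Proof.
have g_gt0 : (0 < gcdn d1 d2)%N by rewrite gcdn_gt0 (ltnW hd1).
have signsE := unit_prod_totally_pos_or_negP (d3_ofP d1 d2) g_gt0
  he1 he2 he3 hr1 hr2 hr3 s m1 m2 m3.
split=> [[_ /signsE //] | /signsE pos_or_neg]; split=> //.
exact: in_unit_prod_sign_expz he1.1 he2.1 he3.1.
Qed.
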